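(* Let $U=(U_{ij})_{i,j=1}^M$, $U_{ij}\in M_M(\mathbb C)$, and $V=(V_{ab})_{a,b=1}^N$, $V_{ab}\in M_N(\mathbb C)$, be projective models, $Q\in M_{M\times N}(\mathbb T)$, and $W=U\otimes_QV$. Then for all $p,r\geq1$, $$c_p^r(W)=\frac{1}{(MN)^r}\sum_{i,b}\Delta_U(i)\,\Delta_{V'}(b^t)\prod_{t=1}^r\prod_{s=1}^p\frac{Q_{i_s^tb_s^t}\,Q_{i_s^{t+1}b_{s+1}^t}}{Q_{i_s^tb_{s+1}^t}\,Q_{i_s^{t+1}b_s^t}},$$ where the sum is over $i=(i_s^t)\in M_{r\times p}(\{1,\dots,M\})$ and $b=(b_s^t)\in M_{r\times p}(\{1,\dots,N\})$ ($t$ = row index, $s$ = column index), the upper indices are taken modulo $r$ and lower indices modulo $p$ (so $i^{r+1}=i^1$, $b_{p+1}=b_1$), $$\Delta_U(i)=M^r\,(T_p^U)_{i_1^1\dots i_p^1,\,i_1^2\dots i_p^2}(T_p^U)_{i_1^2\dots i_p^2,\,i_1^3\dots i_p^3}\cdots(T_p^U)_{i_1^r\dots i_p^r,\,i_1^1\dots i_p^1},$$ and similarly $\Delta_{V'}(b^t)=N^p\,(T_r^{V'})_{b_1^1\dots b_1^r,\,b_2^1\dots b_2^r}\cdots(T_r^{V'})_{b_p^1\dots b_p^r,\,b_1^1\dots b_1^r}$.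
   Context: A square matrix of operators is magic if its entries are orthogonal projections and rows and columns sum to $1$. For $U=(U_{ij})_{i,j=1}^n$, $U_{ij}\in M_n(\mathbb C)$, $U'$ is given by $(U'_{kl})_{ij}=(U_{ij})_{kl}$, and $U$ is a projective model if $U$ and $U'$ are magic. $T_p^U\in M_{n^p}(\mathbb C)$ has entries $(T_p^U)_{i_1\dots i_p,j_1\dots j_p}=tr(U_{i_1j_1}\cdots U_{i_pj_p})$ with $tr$ the normalized trace, and $c_p^r(U)=Tr((T_p^U)^r)$. $W=U\otimes_QV$ is defined by $(W_{ia,jb})_{kc,ld}=\frac{Q_{ic}Q_{jd}}{Q_{id}Q_{jc}}(U_{ij})_{kl}(V_{ab})_{cd}$, with $i,j,k,l\le M$ and $a,b,c,d\le N$; $c_p^r(W)$ is defined with $n=MN$. *)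

From HB Require Import structures.
From mathcomp Require Import all_boot all_order all_algebra.
Set Implicit Arguments. Unset Strict Implicit. Unset Printing Implicit Defensive.
Import Order.TTheory GRing.Theory Num.Theory.
Local Open Scope ring_scope.

(* Complex scalars: an arbitrary numClosedFieldType C (e.g. C = R[i]). *)
Section Defs.
Variable C : numClosedFieldType.

Definition opmx (n : nat) := 'I_n -> 'I_n -> 'M[C]_n.

Definition adjmx (n : nat) (A : 'M[C]_n) : 'M[C]_n := (map_mx Num.conj A)^T.

Definition is_proj (n : nat) (P : 'M[C]_n) : Prop :=
  P *m P = P /\ adjmx P = P.

Definition magic (n : nat) (U : opmx n) : Prop :=
  (forall i j, is_proj (U i j)) /\
  (forall i, \sum_j U i j = 1%:M) /\
  (forall j, \sum_i U i j = 1%:M).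

Definition flipop (n : nat) (U : opmx n) : opmx n :=
  fun k l => \matrix_(i, j) U i j k l.

Definition projective_model (n : nat) (U : opmx n) : Prop :=
  magic U /\ magic (flipop U).

Definition ntr (n : nat) (A : 'M[C]_n) : C := \tr A / n%:R.

Definition Tentry (n p : nat) (U : opmx n) (ii jj : {ffun 'I_p -> 'I_n}) : C :=
  ntr (\prod_(s < p) U (ii s) (jj s)).

(* T_p^U as a matrix, indexed by multi-indices (via enumeration of 'I_n^p) *)
Definition Tmat (n p : nat) (U : opmx n) : 'M[C]_(#|{: {ffun 'I_p -> 'I_n}}|) :=
  \matrix_(x, y) Tentry U (enum_val x) (enum_val y).

Definition cpr (n p r : nat) (U : opmx n) : C := \tr ((Tmat p U) ^+ r).

(* W = U (x)_Q V; the double index (i,a) in {1..M}x{1..N} is encoded as an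
   ordinal of 'I_(#|'I_M * 'I_N|) (= 'I_(MN)) via the canonical enumeration. *)
Definition pidx (M N : nat) := 'I_(#|{: 'I_M * 'I_N}|).
Definition unp (M N : nat) (x : pidx M N) : 'I_M * 'I_N := enum_val x.

Definition qtensor (M N : nat) (U : opmx M) (V : opmx N) (Q : 'M[C]_(M, N))
  : opmx #|{: 'I_M * 'I_N}| :=
  fun x y => \matrix_(u, v)
    let: (i, a) := unp x in let: (j, b) := unp y in
    let: (k, c) := unp u in let: (l, d) := unp v in
    (Q i c * Q j d) / (Q i d * Q j c) * U i j k l * V a b c d.

Definition nxt (n : nat) (i : 'I_n) : 'I_n := ordS i.

Definition colf (r p K : nat) (b : {ffun 'I_r -> {ffun 'I_p -> 'I_K}}) (s : 'I_p)
  : {ffun 'I_r -> 'I_K} := [ffun t => b t s].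

Definition DeltaU (M p r : nat) (U : opmx M) (i : {ffun 'I_r -> {ffun 'I_p -> 'I_M}}) : C :=
  (M%:R) ^+ r * \prod_(t < r) Tentry U (i t) (i (nxt t)).

Definition DeltaV' (N p r : nat) (V : opmx N) (b : {ffun 'I_r -> {ffun 'I_p -> 'I_N}}) : C :=
  (N%:R) ^+ p * \prod_(s < p) Tentry (flipop V) (colf b s) (colf b (nxt s)).

End Defs.

(* Expanding each normalized trace in Tr((T_p^W)^r) as a sum over cyclic index paths writes
   c_p^r(W) as (MN)^-r times a sum, over pairs (x, y) of r x p arrays of double indices, of
   products of entries (W_{x x'})_{y y'} of W.  Writing x = (i, a) and y = (k, b), each entry
   is a Q-factor depending only on (i, b) times an entry of U indexed by (i, k) times an entry
   of V indexed by (a, b); summing over k reassembles Delta_U(i), and summing over a, read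
   along the columns of b, reassembles Delta_V'(b). *)
From HB Require Import structures.
From mathcomp Require Import all_boot all_order all_algebra.
Set Implicit Arguments. Unset Strict Implicit. Unset Printing Implicit Defensive.
Import Order.TTheory GRing.Theory Num.Theory.
Local Open Scope ring_scope.

Lemma reindex_cancel (R : nmodType) (X Y : finType) (h : X -> Y) (g : Y -> X) :
  cancel h g -> cancel g h -> forall F : Y -> R, \sum_y F y = \sum_x F (h x).
Proof. by move=> hK gK F; rewrite (reindex h) //; exists g => ? _. Qed.

Section FfunRcons.
Variables (I : Type) (k : nat).

Definition ffrcons (f : {ffun 'I_k -> I}) (l : I) : {ffun 'I_k.+1 -> I} :=
  [ffun j => if unlift ord_max j is Some j' then f j' else l].

Lemma ffrcons_widen f l (s : 'I_k) : ffrcons f l (widen_ord (leqnSn k) s) = f s.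
Proof.
have -> : widen_ord (leqnSn k) s = lift ord_max s by apply/val_inj/esym/lift_max.
by rewrite ffunE liftK.
Qed.

Lemma ffrcons_max f l : ffrcons f l ord_max = l.
Proof. by rewrite ffunE unlift_none. Qed.

End FfunRcons.

Lemma sum_ffun_rcons (R : nmodType) (I : finType) k (F : {ffun 'I_k.+1 -> I} -> R) :
  \sum_g F g = \sum_(f : {ffun 'I_k -> I}) \sum_(l : I) F (ffrcons f l).
Proof.
rewrite pair_bigA /=.
pose g (f : {ffun 'I_k.+1 -> I}) := ([ffun s => f (widen_ord (leqnSn k) s)], f ord_max).
apply: (@reindex_cancel _ _ _ (fun x => ffrcons x.1 x.2) g).
- by case=> f l; rewrite /g ffrcons_max; congr (_, _); apply/ffunP => s;
    rewrite ffunE ffrcons_widen.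
- move=> f; apply/ffunP => j; rewrite ffunE.
  case: unliftP => [s ->|->] /=; last by [].
  by rewrite ffunE; congr (f _); apply/val_inj/esym/lift_max.
Qed.

Section TracePaths.
Variables (R : comNzRingType) (n : nat).

Lemma prod_mx_entry k (A : 'I_k.+1 -> 'M[R]_n) (u v : 'I_n) :
  (\prod_(s < k.+1) A s) u v =
  \sum_(f : {ffun 'I_k.+1 -> 'I_n} | f ord0 == u)
    \prod_(s < k.+1) A s (f s) (ffrcons f v (lift ord0 s)).
Proof.
elim: k A u v => [|k IH] A u v.
  rewrite big_ord1 (big_pred1 [ffun=> u]) => [|f]; last first.
    apply/eqP/eqP => [<-|->]; last by rewrite ffunE.
    by apply/ffunP => s; rewrite ffunE (ord1 s).
  rewrite big_ord1 ffunE; congr (A _ _ _).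
  by rewrite (_ : lift ord0 ord0 = ord_max) ?ffrcons_max; last exact: val_inj.
rewrite big_ord_recr mxE.
under eq_bigr => l _ do rewrite IH mulr_suml.
rewrite exchange_big /= [LHS]big_mkcond [RHS]big_mkcond [RHS]sum_ffun_rcons.
apply: eq_bigr => f _.
have rcons_ord0 l : ffrcons f l ord0 = f ord0.
  by rewrite (_ : ord0 = widen_ord (leqnSn k.+1) ord0) ?ffrcons_widen //; apply: val_inj.
under [RHS]eq_bigr => l _ do rewrite rcons_ord0.
case: eqP => _; last by rewrite big1.
apply: eq_bigr => l _; rewrite [RHS]big_ord_recr /=.
rewrite ffrcons_max (_ : lift ord0 ord_max = ord_max) ?ffrcons_max;
  last exact: val_inj.
congr (_ * _); apply: eq_bigr => s _; rewrite ffrcons_widen.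
have -> : lift ord0 (widen_ord (leqnSn k.+1) s) = widen_ord (leqnSn k.+2) (lift ord0 s).
  exact: val_inj.
by rewrite ffrcons_widen.
Qed.

Lemma tr_prod_mx k (A : 'I_k.+1 -> 'M[R]_n) :
  \tr (\prod_(s < k.+1) A s) =
  \sum_(f : {ffun 'I_k.+1 -> 'I_n}) \prod_(s < k.+1) A s (f s) (f (ordS s)).
Proof.
rewrite /mxtrace; under eq_bigr => u _ do rewrite prod_mx_entry.
rewrite (exchange_big_dep xpredT) //=; apply: eq_bigr => f _.
rewrite (big_pred1 (f ord0)) => [|u]; last by rewrite /= eq_sym.
apply: eq_bigr => s _; congr (A s _ _); rewrite ffunE.
case: unliftP => [j|] /(congr1 (@nat_of_ord _)); rewrite lift0 ?lift_max => sj.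
- by congr (f _); apply: val_inj; rewrite /= sj modn_small.
- by congr (f _); apply: val_inj; rewrite /= sj modnn.
Qed.

End TracePaths.

Lemma tr_exp_enum_mx (R : comNzRingType) (X : finType) (T : X -> X -> R) r :
  \tr ((\matrix_(x, y) T (enum_val x) (enum_val y) : 'M[R]_#|{: X}|) ^+ r.+1) =
  \sum_(ii : {ffun 'I_r.+1 -> X}) \prod_(t < r.+1) T (ii t) (ii (ordS t)).
Proof.
rewrite -{1}(card_ord r.+1) -prodr_const tr_prod_mx.
rewrite (@reindex_cancel _ _ _ (fun ii : {ffun 'I_r.+1 -> X} => [ffun t => enum_rank (ii t)])
  (fun f : {ffun 'I_r.+1 -> 'I_#|{: X}|} => [ffun t => enum_val (f t)])) => [|ii|f].
- by apply: eq_bigr => ii _; apply: eq_bigr => t _; rewrite mxE !ffunE !enum_rankK.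
- by apply/ffunP => t; rewrite !ffunE enum_rankK.
- by apply/ffunP => t; rewrite !ffunE enum_valK.
Qed.

Lemma sum_ffun2_pair (R : nmodType) (A B I J : finType)
    (F : {ffun I -> {ffun J -> 'I_#|{: A * B}|}} -> R) :
  \sum_x F x = \sum_(f : {ffun I -> {ffun J -> A}}) \sum_(g : {ffun I -> {ffun J -> B}})
     F [ffun t => [ffun s => enum_rank (f t s, g t s)]].
Proof.
rewrite pair_bigA /=.
pose unpair (x : {ffun I -> {ffun J -> 'I_#|{: A * B}|}}) :=
  ([ffun t => [ffun s => (enum_val (x t s)).1]], [ffun t => [ffun s => (enum_val (x t s)).2]]).
apply: (reindex_cancel (g := unpair)) => [[f g]|x].
- by congr (_, _); apply/ffunP => t; apply/ffunP => s; rewrite !ffunE enum_rankK.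
- by apply/ffunP => t; apply/ffunP => s; rewrite !ffunE -surjective_pairing enum_valK.
Qed.

Lemma sum_ffun2_tr (R : nmodType) (A I J : finType) (F : {ffun I -> {ffun J -> A}} -> R) :
  \sum_f F f = \sum_(g : {ffun J -> {ffun I -> A}}) F [ffun i => [ffun j => g j i]].
Proof.
apply: (reindex_cancel (h := fun g : {ffun J -> {ffun I -> A}} => [ffun i => [ffun j => g j i]])
                       (g := fun f => [ffun j => [ffun i => f i j]])) => x;
  by apply/ffunP => a; apply/ffunP => b; rewrite !ffunE.
Qed.

Section QuantumTensor.
Variable C : numClosedFieldType.

Lemma cpr_path_sum n p r (W : opmx C n) :
  cpr p.+1 r.+1 W = (n%:R ^+ r.+1)^-1 *
  \sum_(x : {ffun 'I_r.+1 -> {ffun 'I_p.+1 -> 'I_n}})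
  \sum_(y : {ffun 'I_r.+1 -> {ffun 'I_p.+1 -> 'I_n}})
    \prod_(t < r.+1) \prod_(s < p.+1) W (x t s) (x (ordS t) s) (y t s) (y t (ordS s)).
Proof.
rewrite /cpr /Tmat tr_exp_enum_mx mulr_sumr; apply: eq_bigr => x _.
under eq_bigr => t _ do rewrite /Tentry /ntr tr_prod_mx.
by rewrite big_split /= prodr_const card_ord exprVn mulrC bigA_distr_bigA.
Qed.

Lemma DeltaU_path_sum M p r (U : opmx C M) (i : {ffun 'I_r.+1 -> {ffun 'I_p.+1 -> 'I_M}}) :
  DeltaU U i = \sum_(k : {ffun 'I_r.+1 -> {ffun 'I_p.+1 -> 'I_M}})
    \prod_(t < r.+1) \prod_(s < p.+1) U (i t s) (i (ordS t) s) (k t s) (k t (ordS s)).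
Proof.
have M_neq0 : (M%:R : C) != 0 by rewrite pnatr_eq0 -lt0n (leq_trans _ (ltn_ord (i ord0 ord0))).
rewrite /DeltaU /nxt; under eq_bigr => t _ do rewrite /Tentry /ntr tr_prod_mx.
by rewrite prodf_div prodr_const card_ord mulrC divfK ?expf_neq0 // bigA_distr_bigA.
Qed.

Lemma DeltaV'_path_sum N p r (V : opmx C N) (b : {ffun 'I_r.+1 -> {ffun 'I_p.+1 -> 'I_N}}) :
  DeltaV' V b = \sum_(a : {ffun 'I_r.+1 -> {ffun 'I_p.+1 -> 'I_N}})
    \prod_(t < r.+1) \prod_(s < p.+1) V (a t s) (a (ordS t) s) (b t s) (b t (ordS s)).
Proof.
have N_neq0 : (N%:R : C) != 0 by rewrite pnatr_eq0 -lt0n (leq_trans _ (ltn_ord (b ord0 ord0))).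
rewrite /DeltaV' /nxt /colf; under eq_bigr => s _ do rewrite /Tentry /ntr tr_prod_mx.
rewrite prodf_div prodr_const card_ord mulrC divfK ?expf_neq0 // bigA_distr_bigA sum_ffun2_tr.
apply: eq_bigr => a _; rewrite exchange_big /=.
by apply: eq_bigr => s _; apply: eq_bigr => t _; rewrite /flipop !mxE !ffunE.
Qed.

Lemma qtensorE M N (U : opmx C M) (V : opmx C N) (Q : 'M[C]_(M, N)) i a j b k c l d :
  qtensor U V Q (enum_rank (i, a)) (enum_rank (j, b)) (enum_rank (k, c)) (enum_rank (l, d)) =
  Q i c * Q j d / (Q i d * Q j c) * U i j k l * V a b c d.
Proof. by rewrite /qtensor mxE /unp !enum_rankK. Qed.

End QuantumTensor.

Theorem lemma2p7 (C : numClosedFieldType) (M N : nat)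
  (U : opmx C M) (V : opmx C N) (Q : 'M[C]_(M, N))
  (hU : projective_model U) (hV : projective_model V)
  (hQ : forall i a, `|Q i a| = 1)
  (p r : nat) (hp : (0 < p)%N) (hr : (0 < r)%N) :
  cpr p r (qtensor U V Q) =
  ((M * N)%:R ^+ r)^-1 *
  \sum_(i : {ffun 'I_r -> {ffun 'I_p -> 'I_M}})
  \sum_(b : {ffun 'I_r -> {ffun 'I_p -> 'I_N}})
    DeltaU U i * DeltaV' V b *
    \prod_(t < r) \prod_(s < p)
      ((Q (i t s) (b t s) * Q (i (nxt t) s) (b t (nxt s))) /
       (Q (i t s) (b t (nxt s)) * Q (i (nxt t) s) (b t s))).
Proof.
case: p hp => // p _; case: r hr => // r _.
rewrite cpr_path_sum.
have -> : (#|{: 'I_M * 'I_N}|%:R : C) = (M * N)%:R by rewrite card_prod !card_ord.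
congr (_ * _).
rewrite sum_ffun2_pair; apply: eq_bigr => i _.
under eq_bigr => a _ do rewrite sum_ffun2_pair exchange_big /=.
rewrite exchange_big /=; apply: eq_bigr => b _.
rewrite DeltaU_path_sum DeltaV'_path_sum !mulr_suml [LHS]exchange_big /=.
apply: eq_bigr => k _.
rewrite mulr_sumr mulr_suml; apply: eq_bigr => a _.
rewrite -!big_split /=; apply: eq_bigr => t _; rewrite -!big_split /=; apply: eq_bigr => s _.
by rewrite !ffunE qtensorE -mulrA mulrC.
Qed.
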